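(* Let $N=(V,M,E_V,E_M,\mathcal K)$ be a GRN, $P,Q$ assertions and $p$ a path program of $N$. Assume that every loop invariant in $p$ is a weakest one, in the sense that for every $while$ statement $w=(while~e~with~I~do~p')$ occurring in $p$ and all assertions $P',Q'$ such that $\{P'\}w\{Q'\}$ is satisfied, every state satisfying $P'$ satisfies $I$. If the Hoare triple $\{P\}p\{Q\}$ is satisfied, then $P\Rightarrow \mathrm{wp}(p,Q)$ is satisfied by every state of $N$, where $\mathrm{wp}(p,Q)$ is the precondition computed by the backward strategy (i.e. the precondition obtained just before the final application of the Empty program rule).
   Context: Gene regulatory network with multiplexes (GRN): a tuple $N=(V,M,E_V,E_M,\mathcal K)$ where $V$ (variables) and $M$ (multiplexes) are disjoint finite sets; $(V\cup M,E_V\cup E_M)$ is a directed graph whose edges in $E_V$ go from a variable to a multiplex and whose edges in $E_M$ go from a multiplex to a variable or a multiplex, and every directed cycle contains at least one variable; each variable $v$ has a positive integer bound $b_v$; each multiplex $m$ is labelled by a formula $\varphi_m$ built with $\neg,\wedge,\vee$ from atoms $v\ge s$ (where $v\to m\in E_V$ and $s\in\{1,\dots,b_v\}$) and atoms $m'$ (where $m'\to m\in E_M$). For $v\in V$, $N^{-1}(v)$ is the set of multiplexes $m$ with $m\to v\in E_M$. $\mathcal K=\{K_{v,\omega}\}$ is a family of integers indexed by $v\in V$ and $\omega\subseteq N^{-1}(v)$ with $0\le K_{v,\omega}\le b_v$. The flattened formula $\overline{\varphi_m}$ is obtained by repeatedly replacing each multiplex atom $m'$ by $\varphi_{m'}$.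 States: a state is a map $\eta:V\to\mathbb N$ with $\eta(v)\le b_v$; $S$ is the set of states. $\eta\models v\ge s$ iff $\eta(v)\ge s$, extended to connectives as usual. Resources: $\rho(\eta,v)=\{m\in N^{-1}(v):\eta\models\overline{\varphi_m}\}$. $\eta[v\leftarrow k]$ is $\eta$ with $v$ set to $k$. State graph: transition $\eta\to\eta'$ iff either $\eta(v)=K_{v,\rho(\eta,v)}$ for all $v$ and $\eta'=\eta$, or there is $v$ with $\eta(v)\ne K_{v,\rho(\eta,v)}$ and $\eta'=\eta[v\leftarrow\eta(v)\pm1]$, with $+1$ if $\eta(v)<K_{v,\rho(\eta,v)}$ and $-1$ if $\eta(v)>K_{v,\rho(\eta,v)}$. Assertion language: terms are integers, variable symbols $v$, symbols $K_{v,\omega}$, $(t+t')$, $(t-t')$; atoms $t=t'$, $t<t'$, $t>t'$, $t\le t'$, $t\ge t'$; closed under $\neg,\wedge,\vee,\Rightarrow$. $\eta\models_N\varphi$ iff $\varphi$ holds in $\mathbb Z$ after replacing $v$ by $\eta(v)$ and $K_{v,\omega}$ by its value. $Q[v\leftarrow t]$ is substitution of $t$ for $v$. Path programs: generated by $v+$, $v-$, $v:=n$, $assert(e)$, $(p_1;p_2)$ (associative), $(if~e~then~p_1~else~p_2)$, $(while~e~with~I~do~p)$, $\forall(p_1,p_2)$, $\exists(p_1,p_2)$; plus the empty program $\varepsilon$. Semantics: $\leadsto_p\subseteq S\times\mathcal P(S)$ is the smallest relation such that for every $\eta$: (1) for $p=v+$ (resp. $v-$) with $\eta'=\eta[v\leftarrow\eta(v)+1]$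 (resp. $-1$), if $\eta\to\eta'$ is a transition then $\eta\leadsto_p\{\eta'\}$; (2) $\eta\leadsto_{v:=k}\{\eta[v\leftarrow k]\}$; (3) if $\eta\models_N e$ then $\eta\leadsto_{assert(e)}\{\eta\}$; (4) if $\eta\leadsto_{p_1}E_1$ and $\eta\leadsto_{p_2}E_2$ then $\eta\leadsto_{\forall(p_1,p_2)}E_1\cup E_2$; (5) if $\eta\leadsto_{p_i}E$ for some $i\in\{1,2\}$ then $\eta\leadsto_{\exists(p_1,p_2)}E$; (6) if $\eta\leadsto_{p_1}F$ and $(E_e)_{e\in F}$ satisfies $e\leadsto_{p_2}E_e$ for all $e\in F$, then $\eta\leadsto_{p_1;p_2}\bigcup_{e\in F}E_e$; (7) if $\eta\models_N e$ and $\eta\leadsto_{p_1}E$, or $\eta\not\models_N e$ and $\eta\leadsto_{p_2}E$, then $\eta\leadsto_{if~e~then~p_1~else~p_2}E$; (8) for $w=while~e~with~I~do~p_0$: if $\eta\models_N e$ and $\eta\leadsto_{p_0;w}E$ then $\eta\leadsto_wE$; if $\eta\not\models_N e$ then $\eta\leadsto_w\{\eta\}$; (9) $\eta\leadsto_\varepsilon\{\eta\}$. A Hoare triple $\{P\}p\{Q\}$ is satisfied iff for every $\eta\models_N P$ there is $E$ with $\eta\leadsto_pE$ and every $\eta'\in E$ satisfies $Q$. Formulas: $\Phi_v^\omega=\bigwedge_{m\in\omega}\overline{\varphi_m}\wedge\bigwedge_{m\in N^{-1}(v)\setminus\omega}\neg\overline{\varphi_m}$; $\Phi_v^+=\bigwedge_{\omega\subseteq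 N^{-1}(v)}(\Phi_v^\omega\Rightarrow K_{v,\omega}>v)$; $\Phi_v^-=\bigwedge_{\omega\subseteq N^{-1}(v)}(\Phi_v^\omega\Rightarrow K_{v,\omega}<v)$. Backward strategy (weakest precondition computation, following the inference rules of the modified Hoare logic backward from the postcondition): $\mathrm{wp}(v+,Q)=\Phi_v^+\wedge Q[v\leftarrow v+1]$; $\mathrm{wp}(v-,Q)=\Phi_v^-\wedge Q[v\leftarrow v-1]$; $\mathrm{wp}(assert(e),Q)=e\wedge Q$; $\mathrm{wp}(v:=k,Q)=Q[v\leftarrow k]$; $\mathrm{wp}(\forall(p_1,p_2),Q)=\mathrm{wp}(p_1,Q)\wedge\mathrm{wp}(p_2,Q)$; $\mathrm{wp}(\exists(p_1,p_2),Q)=\mathrm{wp}(p_1,Q)\vee\mathrm{wp}(p_2,Q)$; $\mathrm{wp}(p_1;p_2,Q)=\mathrm{wp}(p_1,\mathrm{wp}(p_2,Q))$; $\mathrm{wp}(if~e~then~p_1~else~p_2,Q)=(e\wedge\mathrm{wp}(p_1,Q))\vee(\neg e\wedge\mathrm{wp}(p_2,Q))$; $\mathrm{wp}(while~e~with~I~do~p',Q)=I$ (the loop being handled by separate sub-proofs of $\neg e\wedge I\Rightarrow Q$ and $\{e\wedge I\}p'\{I\}$); $\mathrm{wp}(\varepsilon,Q)=Q$. *)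

From HB Require Import structures.
From Stdlib Require Import ZArith.
From mathcomp Require Import all_boot.

Set Implicit Arguments.
Unset Strict Implicit.
Unset Printing Implicit Defensive.

Section GRNDefs.

Variables (V M : finType).

Inductive mform : Type :=
| MAtomV : V -> nat -> mform
| MAtomM : M -> mform
| MNot : mform -> mform
| MAnd : mform -> mform -> mform
| MOr : mform -> mform -> mform.

(* A GRN with multiplexes.  Edges E_V (variable -> multiplex) and
   E_M (multiplex -> variable (inl) or multiplex (inr)). *)
Record GRN : Type := mkGRN {
  EV : V -> M -> bool;
  EM : M -> V + M -> bool;
  bound : V -> nat;
  phi : M -> mform;
  Kpar : V -> {set M} -> nat
}.

Variable N : GRN.

Definition Ninv (v : V) : {set M} := [set m | EM N m (inl v)].

Fixpoint mform_wf (m : M) (f : mform) : Prop :=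
  match f with
  | MAtomV v s => EV N v m /\ 1 <= s <= bound N v
  | MAtomM m' => EM N m' (inr m)
  | MNot f1 => mform_wf m f1
  | MAnd f1 f2 | MOr f1 f2 => mform_wf m f1 /\ mform_wf m f2
  end.

(* Well-formedness of a GRN:
   - every directed cycle contains a variable, i.e. there is no nonempty
     closed walk using only multiplex->multiplex edges;
   - bounds are positive;
   - formulas only use atoms allowed by the edges;
   - 0 <= K_{v,omega} <= b_v for omega a subset of N^{-1}(v). *)
Definition GRN_wf : Prop :=
  (forall (m : M) (s : seq M),
      path (fun a b => EM N a (inr b)) m s -> last m s = m -> s = [::]) /\
  (forall v, 0 < bound N v) /\
  (forall m, mform_wf m (phi N m)) /\
  (forall v (w : {set M}), w \subset Ninv v -> Kpar N v w <= bound N v).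

(* Flattening: repeatedly replace each multiplex atom m' by phi m'.
   Since multiplex-only paths have at most #|M| nodes (acyclicity),
   #|M| rounds of replacement eliminate every multiplex atom. *)
Fixpoint flatten (n : nat) (f : mform) {struct n} : mform :=
  let fix go (g : mform) : mform :=
    match g with
    | MAtomV v s => MAtomV v s
    | MAtomM m' => match n with 0 => MAtomM m' | n'.+1 => flatten n' (phi N m') end
    | MNot f1 => MNot (go f1)
    | MAnd f1 f2 => MAnd (go f1) (go f2)
    | MOr f1 f2 => MOr (go f1) (go f2)
    end in go f.

Definition flat_phi (m : M) : mform := flatten #|M| (phi N m).

Definition state := {ffun V -> nat}.
Definition is_state (eta : state) : Prop := forall v, eta v <= bound N v.

Definition upd (eta : state) (v : V) (k : nat) : state :=
  [ffun x => if x == v then k else eta x].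

Inductive term : Type :=
| TInt : Z -> term
| TVar : V -> term
| TK : V -> {set M} -> term
| TAdd : term -> term -> term
| TSub : term -> term -> term.

Inductive assn : Type :=
| AEq : term -> term -> assn
| ALt : term -> term -> assn
| AGt : term -> term -> assn
| ALe : term -> term -> assn
| AGe : term -> term -> assn
| ANot : assn -> assn
| AAnd : assn -> assn -> assn
| AOr : assn -> assn -> assn
| AImp : assn -> assn -> assn.

Fixpoint teval (eta : state) (t : term) : Z :=
  match t with
  | TInt z => z
  | TVar v => Z.of_nat (eta v)
  | TK v w => Z.of_nat (Kpar N v w)
  | TAdd t1 t2 => (teval eta t1 + teval eta t2)%Z
  | TSub t1 t2 => (teval eta t1 - teval eta t2)%Z
  end.

Fixpoint sat (eta : state) (a : assn) : bool :=
  match a with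
  | AEq t1 t2 => Z.eqb (teval eta t1) (teval eta t2)
  | ALt t1 t2 => Z.ltb (teval eta t1) (teval eta t2)
  | AGt t1 t2 => Z.ltb (teval eta t2) (teval eta t1)
  | ALe t1 t2 => Z.leb (teval eta t1) (teval eta t2)
  | AGe t1 t2 => Z.leb (teval eta t2) (teval eta t1)
  | ANot a1 => ~~ sat eta a1
  | AAnd a1 a2 => sat eta a1 && sat eta a2
  | AOr a1 a2 => sat eta a1 || sat eta a2
  | AImp a1 a2 => sat eta a1 ==> sat eta a2
  end.

Definition atrue : assn := AEq (TInt 0) (TInt 0).
Definition afalse : assn := AEq (TInt 0) (TInt 1).

(* Multiplex formulas as assertions: v >= s is the atom v >= s.
   (Multiplex atoms do not occur after flattening in a well-formed GRN.) *)
Fixpoint mform_to_assn (f : mform) : assn :=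
  match f with
  | MAtomV v s => AGe (TVar v) (TInt (Z.of_nat s))
  | MAtomM _ => afalse
  | MNot f1 => ANot (mform_to_assn f1)
  | MAnd f1 f2 => AAnd (mform_to_assn f1) (mform_to_assn f2)
  | MOr f1 f2 => AOr (mform_to_assn f1) (mform_to_assn f2)
  end.

Definition flat_assn (m : M) : assn := mform_to_assn (flat_phi m).

Definition rho (eta : state) (v : V) : {set M} :=
  [set m in Ninv v | sat eta (flat_assn m)].

Definition Ktarget (eta : state) (v : V) : nat := Kpar N v (rho eta v).

Definition transition (eta eta' : state) : Prop :=
  ((forall v, eta v = Ktarget eta v) /\ eta' = eta) \/
  (exists v, eta v <> Ktarget eta v /\
     eta' = upd eta v (if eta v < Ktarget eta v then (eta v).+1 else (eta v).-1)).

Inductive prog : Type :=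
| PInc : V -> prog
| PDec : V -> prog
| PSet : V -> nat -> prog
| PAssert : assn -> prog
| PSeq : prog -> prog -> prog
| PIf : assn -> prog -> prog -> prog
| PWhile : assn -> assn -> prog -> prog   (* while e with I do p *)
| PAll : prog -> prog -> prog
| PEx : prog -> prog -> prog
| PEps : prog.

Inductive sem : state -> prog -> (state -> Prop) -> Prop :=
| sem_inc : forall eta v,
    transition eta (upd eta v (eta v).+1) ->
    sem eta (PInc v) (fun x => x = upd eta v (eta v).+1)
| sem_dec : forall eta v,
    transition eta (upd eta v (eta v).-1) -> 0 < eta v ->
    sem eta (PDec v) (fun x => x = upd eta v (eta v).-1)
| sem_set : forall eta v k, k <= bound N v ->
    sem eta (PSet v k) (fun x => x = upd eta v k)
| sem_assert : forall eta e, sat eta e ->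
    sem eta (PAssert e) (fun x => x = eta)
| sem_all : forall eta p1 p2 E1 E2,
    sem eta p1 E1 -> sem eta p2 E2 ->
    sem eta (PAll p1 p2) (fun x => E1 x \/ E2 x)
| sem_ex1 : forall eta p1 p2 E, sem eta p1 E -> sem eta (PEx p1 p2) E
| sem_ex2 : forall eta p1 p2 E, sem eta p2 E -> sem eta (PEx p1 p2) E
| sem_seq : forall eta p1 p2 F (Ef : state -> state -> Prop),
    sem eta p1 F -> (forall e, F e -> sem e p2 (Ef e)) ->
    sem eta (PSeq p1 p2) (fun x => exists2 e, F e & Ef e x)
| sem_if_t : forall eta e p1 p2 E, sat eta e -> sem eta p1 E ->
    sem eta (PIf e p1 p2) E
| sem_if_f : forall eta e p1 p2 E, ~ sat eta e -> sem eta p2 E ->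
    sem eta (PIf e p1 p2) E
| sem_while_t : forall eta e Inv p0 E, sat eta e ->
    sem eta (PSeq p0 (PWhile e Inv p0)) E -> sem eta (PWhile e Inv p0) E
| sem_while_f : forall eta e Inv p0, ~ sat eta e ->
    sem eta (PWhile e Inv p0) (fun x => x = eta)
| sem_eps : forall eta, sem eta PEps (fun x => x = eta).

Definition hoare (P : assn) (p : prog) (Q : assn) : Prop :=
  forall eta, is_state eta -> sat eta P ->
    exists E, sem eta p E /\ forall eta', E eta' -> sat eta' Q.

Inductive subprog : prog -> prog -> Prop :=
| sub_refl : forall p, subprog p p
| sub_seq1 : forall q p1 p2, subprog q p1 -> subprog q (PSeq p1 p2)
| sub_seq2 : forall q p1 p2, subprog q p2 -> subprog q (PSeq p1 p2)
| sub_if1 : forall q e p1 p2, subprog q p1 -> subprog q (PIf e p1 p2)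
| sub_if2 : forall q e p1 p2, subprog q p2 -> subprog q (PIf e p1 p2)
| sub_while : forall q e Inv p0, subprog q p0 -> subprog q (PWhile e Inv p0)
| sub_all1 : forall q p1 p2, subprog q p1 -> subprog q (PAll p1 p2)
| sub_all2 : forall q p1 p2, subprog q p2 -> subprog q (PAll p1 p2)
| sub_ex1 : forall q p1 p2, subprog q p1 -> subprog q (PEx p1 p2)
| sub_ex2 : forall q p1 p2, subprog q p2 -> subprog q (PEx p1 p2).

Definition weakest_invariants (p : prog) : Prop :=
  forall e Inv p0, subprog (PWhile e Inv p0) p ->
    forall P' Q', hoare P' (PWhile e Inv p0) Q' ->
      forall eta, is_state eta -> sat eta P' -> sat eta Inv.

Fixpoint tsubst (v : V) (t : term) (u : term) : term :=
  match u with
  | TInt z => TInt z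
  | TVar x => if x == v then t else TVar x
  | TK x w => TK x w
  | TAdd u1 u2 => TAdd (tsubst v t u1) (tsubst v t u2)
  | TSub u1 u2 => TSub (tsubst v t u1) (tsubst v t u2)
  end.

Fixpoint asubst (v : V) (t : term) (a : assn) : assn :=
  match a with
  | AEq u1 u2 => AEq (tsubst v t u1) (tsubst v t u2)
  | ALt u1 u2 => ALt (tsubst v t u1) (tsubst v t u2)
  | AGt u1 u2 => AGt (tsubst v t u1) (tsubst v t u2)
  | ALe u1 u2 => ALe (tsubst v t u1) (tsubst v t u2)
  | AGe u1 u2 => AGe (tsubst v t u1) (tsubst v t u2)
  | ANot a1 => ANot (asubst v t a1)
  | AAnd a1 a2 => AAnd (asubst v t a1) (asubst v t a2)
  | AOr a1 a2 => AOr (asubst v t a1) (asubst v t a2)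
  | AImp a1 a2 => AImp (asubst v t a1) (asubst v t a2)
  end.

Definition bigAnd (l : seq assn) : assn := foldr AAnd atrue l.

Definition Phi_omega (v : V) (w : {set M}) : assn :=
  AAnd (bigAnd [seq flat_assn m | m <- enum w])
       (bigAnd [seq ANot (flat_assn m) | m <- enum (Ninv v :\: w)]).

Definition Phi_plus (v : V) : assn :=
  bigAnd [seq AImp (Phi_omega v w) (AGt (TK v w) (TVar v))
         | w <- enum (powerset (Ninv v))].

Definition Phi_minus (v : V) : assn :=
  bigAnd [seq AImp (Phi_omega v w) (ALt (TK v w) (TVar v))
         | w <- enum (powerset (Ninv v))].

Fixpoint wp (p : prog) (Q : assn) : assn :=
  match p with
  | PInc v => AAnd (Phi_plus v) (asubst v (TAdd (TVar v) (TInt 1)) Q)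
  | PDec v => AAnd (Phi_minus v) (asubst v (TSub (TVar v) (TInt 1)) Q)
  | PSet v k => asubst v (TInt (Z.of_nat k)) Q
  | PAssert e => AAnd e Q
  | PSeq p1 p2 => wp p1 (wp p2 Q)
  | PIf e p1 p2 => AOr (AAnd e (wp p1 Q)) (AAnd (ANot e) (wp p2 Q))
  | PWhile e Inv p0 => Inv
  | PAll p1 p2 => AAnd (wp p1 Q) (wp p2 Q)
  | PEx p1 p2 => AOr (wp p1 Q) (wp p2 Q)
  | PEps => Q
  end.

End GRNDefs.

(* It suffices to show that if some execution of [p] from [eta] ends only in
   states satisfying [Q], then [eta] satisfies [wp p Q]; this goes by induction
   on the execution, for all [Q].  For increments and decrements, the only
   [omega] with [eta |= Phi_v^omega] is [rho(eta, v)], so [Phi_v^+] (resp.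
   [Phi_v^-]) says exactly that [v] may move up (resp. down).  For a loop,
   the execution itself witnesses the triple {P'} w {Q} where [P'] pins down
   the state [eta], so the weakest-invariant hypothesis yields [eta |= I]. *)
From Pilot Require Import Defs.
From Stdlib Require Import ZArith Lia.
From mathcomp Require Import all_boot zify.

Set Implicit Arguments.
Unset Strict Implicit.
Unset Printing Implicit Defensive.

Section WpCompleteness.

Variables (V M : finType) (N : GRN V M).

Lemma sat_bigAnd (eta : state V) (l : seq (assn V M)) :
  sat N eta (bigAnd l) = all (sat N eta) l.
Proof. by elim: l => //= a l ->. Qed.

Lemma teval_tsubst (eta : state V) v t n (u : term V M) :
  teval N eta t = Z.of_nat n ->
  teval N eta (tsubst v t u) = teval N (upd eta v n) u.
Proof.
move=> Ht; elim: u => //= [x|u1 -> u2 ->|u1 -> u2 ->] //.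
by rewrite /upd ffunE; case: eqP => // ->.
Qed.

Lemma sat_asubst (eta : state V) v t n (a : assn V M) :
  teval N eta t = Z.of_nat n ->
  sat N eta (asubst v t a) = sat N (upd eta v n) a.
Proof.
move=> /teval_tsubst tsubstE.
by elim: a => /= *; rewrite ?tsubstE; congruence.
Qed.

Lemma sat_Phi_omega_rho (eta : state V) v (w : {set M}) :
  w \subset Ninv N v -> sat N eta (Phi_omega N v w) -> w = rho N eta v.
Proof.
move=> /subsetP sub_w; rewrite /= !sat_bigAnd !all_map.
case/andP=> /allP in_w /allP out_w; apply/setP => m; rewrite /rho inE.
have [m_w | m_nw] := boolP (m \in w).
  by rewrite sub_w //=; move: (in_w m); rewrite mem_enum => /(_ m_w).
have [m_v /= | //] := boolP (m \in Ninv N v).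
by move: (out_w m); rewrite mem_enum inE m_nw m_v => /(_ isT) /negbTE.
Qed.

Lemma sat_Phi_plus (eta : state V) v :
  eta v < Ktarget N eta v -> sat N eta (Phi_plus N v).
Proof.
move=> lt_K; rewrite sat_bigAnd all_map; apply/allP => w.
rewrite mem_enum powersetE => sub_w /=.
apply/implyP => /(sat_Phi_omega_rho sub_w) w_rho.
by apply/Z.ltb_lt; move: lt_K; rewrite /Ktarget -w_rho; lia.
Qed.

Lemma sat_Phi_minus (eta : state V) v :
  Ktarget N eta v < eta v -> sat N eta (Phi_minus N v).
Proof.
move=> gt_K; rewrite sat_bigAnd all_map; apply/allP => w.
rewrite mem_enum powersetE => sub_w /=.
apply/implyP => /(sat_Phi_omega_rho sub_w) w_rho.
by apply/Z.ltb_lt; move: gt_K; rewrite /Ktarget -w_rho; lia.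
Qed.

Lemma transition_upd (eta : state V) v n :
  transition N eta (upd eta v n) -> n <> eta v ->
  eta v <> Ktarget N eta v /\
  n = if eta v < Ktarget N eta v then (eta v).+1 else (eta v).-1.
Proof.
have at_v (eta' : state V) : eta' = eta -> eta' v = eta v by move->.
have updE (k : nat) u : upd eta u k v = if v == u then k else eta v.
  by rewrite /upd ffunE.
case=> [[_ /at_v] | [u [ne_K /(congr1 (fun f : state V => f v))]]].
  by rewrite updE eqxx.
by rewrite !updE eqxx; case: eqP => [-> | _] //= ->.
Qed.

Lemma transition_inc (eta : state V) v :
  transition N eta (upd eta v (eta v).+1) -> eta v < Ktarget N eta v.
Proof.
move=> /transition_upd inc_v; have [|ne_K] := inc_v; first lia.
by case: ifP => cmp_K; lia.
Qed.

Lemma transition_dec (eta : state V) v :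
  transition N eta (upd eta v (eta v).-1) -> 0 < eta v ->
  Ktarget N eta v < eta v.
Proof.
move=> /transition_upd dec_v pos_v; have [|ne_K] := dec_v; first lia.
by case: ifP => cmp_K; lia.
Qed.

Hypothesis K_bounded :
  forall v (w : {set M}), w \subset Ninv N v -> Kpar N v w <= bound N v.

Lemma Ktarget_le_bound (eta : state V) v : Ktarget N eta v <= bound N v.
Proof. by apply: K_bounded; apply/subsetP => m; rewrite inE => /andP[]. Qed.

Lemma is_state_upd (eta : state V) v n :
  is_state N eta -> n <= bound N v -> is_state N (upd eta v n).
Proof.
move=> st_eta le_n u; rewrite ffunE.
by case: eqP => [-> | _]; last apply: st_eta.
Qed.

Lemma sem_is_state (eta : state V) p E :
  sem N eta p E -> is_state N eta -> forall x, E x -> is_state N x.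
Proof.
elim=> {eta p E}.
- move=> eta v /transition_inc lt_K st_eta x ->; apply: is_state_upd => //.
  by have := Ktarget_le_bound eta v; lia.
- move=> eta v _ _ st_eta x ->; apply: is_state_upd => //.
  by have := st_eta v; lia.
- by move=> eta v k le_k st_eta x ->; apply: is_state_upd.
- by move=> eta e _ st_eta x ->.
- by move=> eta p1 p2 E1 E2 _ IH1 _ IH2 st_eta x [/IH1 | /IH2]; apply.
- by move=> eta p1 p2 E _ IH; apply: IH.
- by move=> eta p1 p2 E _ IH; apply: IH.
- move=> eta p1 p2 F Ef _ IH1 _ IH2 st_eta x [e Fe].
  exact: IH2 e Fe (IH1 st_eta e Fe) x.
- by move=> eta e p1 p2 E _ _ IH; apply: IH.
- by move=> eta e p1 p2 E _ _ IH; apply: IH.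
- by move=> eta e I p0 E _ _ IH; apply: IH.
- by move=> eta e I p0 _ st_eta x ->.
- by move=> eta st_eta x ->.
Qed.

Definition state_assn (eta : state V) : assn V M :=
  bigAnd [seq AEq (TVar M v) (TInt V M (Z.of_nat (eta v))) | v <- enum V].

Lemma sat_state_assn (eta x : state V) : sat N x (state_assn eta) = (x == eta).
Proof.
rewrite sat_bigAnd all_map; apply/allP/eqP => [all_eq | ->].
  by apply/ffunP => v; move: (all_eq v (mem_enum _ v)) => /= /Z.eqb_eq; lia.
by move=> v _; apply/Z.eqb_eq.
Qed.

Lemma hoare_state_assn (eta : state V) p E (Q : assn V M) :
  sem N eta p E -> (forall x, E x -> sat N x Q) -> hoare N (state_assn eta) p Q.
Proof.
by move=> sem_p sat_Q x _; rewrite sat_state_assn => /eqP ->; exists E.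
Qed.

Lemma weakest_invariants_subprog p p' :
  weakest_invariants N p -> (forall q, subprog q p' -> subprog q p) ->
  weakest_invariants N p'.
Proof. by move=> wi_p sub e I p0 /sub; apply: wi_p. Qed.

Lemma weakest_invariant_holds (eta : state V) e I p0 E (Q : assn V M) :
  weakest_invariants N (PWhile e I p0) -> is_state N eta ->
  sem N eta (PWhile e I p0) E -> (forall x, E x -> sat N x Q) -> sat N eta I.
Proof.
move=> wi st_eta sem_w sat_Q.
have triple_w := hoare_state_assn sem_w sat_Q.
apply: (wi e I p0 (Defs.sub_refl _) _ _ triple_w _ st_eta).
by rewrite sat_state_assn.
Qed.

Lemma sem_sat_wp (eta : state V) p E (Q : assn V M) :
  sem N eta p E -> weakest_invariants N p ->
  is_state N eta -> (forall x, E x -> sat N x Q) -> sat N eta (wp N p Q).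
Proof.
move=> sem_p; elim: sem_p Q => {eta p E} /=.
- move=> eta v /transition_inc lt_K Q _ _ sat_Q.
  rewrite sat_Phi_plus // (@sat_asubst _ _ _ (eta v).+1); first exact: sat_Q.
  by rewrite /=; lia.
- move=> eta v dec_v pos_v Q _ _ sat_Q.
  rewrite sat_Phi_minus ?(transition_dec dec_v) //.
  rewrite (@sat_asubst _ _ _ (eta v).-1); first exact: sat_Q.
  by rewrite /=; lia.
- move=> eta v k _ Q _ _ sat_Q.
  by rewrite (@sat_asubst _ _ _ k) //; apply: sat_Q.
- by move=> eta e sat_e Q _ _ sat_Q; rewrite sat_e; apply: sat_Q.
- move=> eta p1 p2 E1 E2 _ IH1 _ IH2 Q wi st_eta sat_Q; apply/andP; split.
    apply: IH1 => [|//|x E1x]; last by apply: sat_Q; left.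
    by apply: weakest_invariants_subprog wi _ => q; apply: sub_all1.
  apply: IH2 => [|//|x E2x]; last by apply: sat_Q; right.
  by apply: weakest_invariants_subprog wi _ => q; apply: sub_all2.
- move=> eta p1 p2 E _ IH1 Q wi st_eta sat_Q; rewrite IH1 //.
  by apply: weakest_invariants_subprog wi _ => q; apply: sub_ex1.
- move=> eta p1 p2 E _ IH2 Q wi st_eta sat_Q; rewrite IH2 ?orbT //.
  by apply: weakest_invariants_subprog wi _ => q; apply: sub_ex2.
- move=> eta p1 p2 F Ef sem_p1 IH1 _ IH2 Q wi st_eta sat_Q.
  apply: IH1 => [|//|x Fx].
    by apply: weakest_invariants_subprog wi _ => q; apply: sub_seq1.
  apply: IH2 (sem_is_state sem_p1 st_eta Fx) _ => [//||y Efy].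
    by apply: weakest_invariants_subprog wi _ => q; apply: sub_seq2.
  by apply: sat_Q; exists x.
- move=> eta e p1 p2 E sat_e _ IH1 Q wi st_eta sat_Q; rewrite sat_e IH1 //.
  by apply: weakest_invariants_subprog wi _ => q; apply: sub_if1.
- move=> eta e p1 p2 E /negP/negbTE sat_e _ IH2 Q wi st_eta sat_Q.
  rewrite sat_e IH2 ?orbT //.
  by apply: weakest_invariants_subprog wi _ => q; apply: sub_if2.
- move=> eta e I p0 E sat_e sem_body _ Q wi st_eta.
  exact: weakest_invariant_holds wi st_eta (sem_while_t sat_e sem_body).
- move=> eta e I p0 not_e Q wi st_eta.
  exact: weakest_invariant_holds wi st_eta (sem_while_f I p0 not_e).
- by move=> eta Q _ _; apply.
Qed.

End WpCompleteness.

Theorem mainTheorem2 (V M : finType) (N : GRN V M) (P Q : assn V M) (p : prog V M) :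
  GRN_wf N ->
  weakest_invariants N p ->
  hoare N P p Q ->
  forall eta : state V, is_state N eta -> sat N eta (AImp P (wp N p Q)).
Proof.
move=> [_ [_ [_ K_bounded]]] wi triple eta st_eta /=; apply/implyP => sat_P.
have [E [sem_p sat_Q]] := triple eta st_eta sat_P.
exact: (sem_sat_wp K_bounded sem_p wi st_eta sat_Q).
Qed.
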